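(* Let $\Lambda$ be a finite interval and $R\in\mathcal R_\Lambda$ a root tiling with $K\in\mathbb N$ voids located at $v_1<\dots<v_K$. Then there are $L_1,\dots,L_{K-1}\in\mathbb N_0$ and vectors $\psi^l,\psi^r$ such that $$\psi_\Lambda(R)=\psi^l\otimes|0\rangle_{v_1}\otimes\varphi_{L_1}\otimes\cdots\otimes\varphi_{L_{K-1}}\otimes|0\rangle_{v_K}\otimes\psi^r$$ (factors on consecutive sites from left to right), where for some $L_0,L_K\in\mathbb N_0$: $\psi^l=\lambda|11000\rangle\otimes\varphi_{L_0}$ if $R$ starts with a left boundary dimer and $\psi^l=\varphi_{L_0}$ otherwise; $\psi^r=\lambda\varphi_{L_K}\otimes|011\rangle$ if $R$ ends with a right dimer, $\psi^r=\varphi^{(j)}_{L_K}$ if $R$ ends with a right $j$-monomer ($j\in\{1,2\}$), and $\psi^r=\varphi_{L_K}$ otherwise. Here $\varphi_0=1$ (the factor is absent).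
   Context: $\mathcal H_\Lambda=\bigotimes_{x\in\Lambda}\mathbb C^2$ with basis $|1\rangle,|0\rangle$ per site, product basis $|\boldsymbol\sigma\rangle$; $\lambda\in\mathbb C$. Tiles occupy consecutive sites and carry 0/1 words: void $0$; monomer $100$; dimer $011000$; left boundary dimer $11000$ (only as first tile); and, only as last tile: right dimer $011$, right 1-monomer $1$, right 2-monomer $10$, truncated 1-dimer $0110$, truncated 2-dimer $01100$. A root tiling $R$ of $\Lambda$ is a tiling by consecutive voids and monomers, optionally with a left boundary dimer as first tile and optionally with one of right dimer, right 1-monomer, right 2-monomer as last tile; $\mathcal R_\Lambda$ is their set. A VMD tiling derived from $R$ is obtained by choosing disjoint pairs of consecutive tiles of $R$, each either two monomers (replaced by a dimer) or a monomer followed by a right $j$-monomer, $j\in\{1,2\}$ (replaced by the truncated $j$-dimer); $\mathcal D_\Lambda(R)$ is their set, $\boldsymbol\sigma_\Lambda(\mathbf D)$ the concatenated particle content, $\#(\mathbf D)$ the number of tiles that are dimers, boundary dimers or truncated dimers, and $\psi_\Lambda(R)=\sum_{\mathbf D\in\mathcal D_\Lambda(R)}\lambda^{\#(\mathbf D)}|\boldsymbol\sigma_\Lambda(\mathbf D)\rangle$. For $L\in\mathbb N$, $\varphi_L=\psi_{[1,3L]}(R_M)$ where $R_M$ is the root tiling consisting of $L$ monomers; for $j\in\{1,2\}$, $\varphi^{(j)}_L=\psi_{[1,3(L-1)+j]}(R)$ with $R$ consisting of $L-1$ monomers followed by a right $j$-monomer. *)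

From mathcomp Require Import all_boot all_order all_algebra.
Set Implicit Arguments. Unset Strict Implicit. Unset Printing Implicit Defensive.
Import GRing.Theory.
Local Open Scope ring_scope.

(* ---------- Vectors in  H = (C^2)^{⊗ n}  ---------------------------------
   A vector on n consecutive sites is a pair (n, c) where c : seq bool -> F
   gives the coefficient of the product basis vector |w>, w a 0/1 word
   (true = 1, false = 0); c vanishes on words of length <> n. *)
Definition qvec (F : Type) := (nat * (seq bool -> F))%type.

Section Vec.
Variable F : comRingType.

Definition ket (s : seq bool) : qvec F := (size s, fun w => (w == s)%:R).

Definition tens (u v : qvec F) : qvec F :=
  (u.1 + v.1, fun w => if size w == (u.1 + v.1)%N
                       then u.2 (take u.1 w) * v.2 (drop u.1 w) else 0).

Definition scale (c : F) (u : qvec F) : qvec F := (u.1, fun w => c * u.2 w).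
End Vec.

Inductive tile :=
  | Void
  | Mono
  | Dimer
  | LDimer
  | RDimer
  | RMono1
  | RMono2
  | TDimer1
  | TDimer2.

Definition tword (t : tile) : seq bool :=
  match t with
  | Void => [:: false]
  | Mono => [:: true; false; false]
  | Dimer => [:: false; true; true; false; false; false]
  | LDimer => [:: true; true; false; false; false]
  | RDimer => [:: false; true; true]
  | RMono1 => [:: true]
  | RMono2 => [:: true; false]
  | TDimer1 => [:: false; true; true; false]
  | TDimer2 => [:: false; true; true; false; false]
  end.

Definition tiles_word (D : seq tile) : seq bool := flatten (map tword D).

Definition is_void t := if t is Void then true else false.
Definition is_mono t := if t is Mono then true else false.
Definition is_ldimer t := if t is LDimer then true else false.

Definition is_dimerlike t :=
  match t with Dimer | LDimer | RDimer | TDimer1 | TDimer2 => true | _ => false end.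

Definition ndim (D : seq tile) : nat := count is_dimerlike D.

Definition root_tiling (n : nat) (R : seq tile) : Prop :=
  size (tiles_word R) = n /\
  exists l m r : seq tile,
    R = l ++ m ++ r /\
    (l = [::] \/ l = [:: LDimer]) /\
    all (fun t => is_void t || is_mono t) m /\
    (r = [::] \/ r = [:: RDimer] \/ r = [:: RMono1] \/ r = [:: RMono2]).

(* All VMD tilings derived from R: each element corresponds to exactly one
   choice of disjoint pairs of consecutive tiles (Mono,Mono) -> Dimer,
   (Mono, RMono j) -> TDimer j. *)
Fixpoint derive (R : seq tile) : seq (seq tile) :=
  match R with
  | [::] => [:: [::]]
  | Mono :: ((Mono :: R') as R2) =>
      map (cons Mono) (derive R2) ++ map (cons Dimer) (derive R')
  | Mono :: ((RMono1 :: R') as R2) =>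
      map (cons Mono) (derive R2) ++ map (cons TDimer1) (derive R')
  | Mono :: ((RMono2 :: R') as R2) =>
      map (cons Mono) (derive R2) ++ map (cons TDimer2) (derive R')
  | t :: R' => map (cons t) (derive R')
  end.

(* 0-based offsets (within the interval) of the sites occupied by voids *)
Fixpoint void_offs (pos : nat) (R : seq tile) : seq nat :=
  match R with
  | [::] => [::]
  | t :: R' => (if is_void t then [:: pos] else [::]) ++
               void_offs (pos + size (tword t)) R'
  end.
Definition void_offsets (R : seq tile) := void_offs 0 R.

Section Psi.
Variables (F : comRingType) (lam : F).

Definition psi (R : seq tile) : qvec F :=
  (size (tiles_word R),
   fun w => \sum_(D <- derive R) lam ^+ ndim D * (w == tiles_word D)%:R).

(* varphi_L : L monomers (varphi_0 = 1 = |empty word>) *)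
Definition varphi (L : nat) : qvec F := psi (nseq L Mono).

(* varphi^{(j)}_L : L-1 monomers followed by a right j-monomer (L >= 1) *)
Definition varphiR (j L : nat) : qvec F :=
  psi (rcons (nseq L.-1 Mono) (if j == 1%N then RMono1 else RMono2)).

(* |0> ⊗ varphi_{L1} ⊗ |0> ⊗ ... ⊗ varphi_{L_{K-1}} ⊗ |0>  after the first |0>:
   chain [L1;...;Lm] = varphi_{L1} ⊗ |0> ⊗ ... ⊗ varphi_{Lm} ⊗ |0>  *)
Definition chain (Ls : seq nat) : qvec F :=
  foldr (fun L acc => tens (varphi L) (tens (ket F [:: false]) acc)) (ket F [::]) Ls.
End Psi.

From HB Require Import structures.
From mathcomp Require Import all_boot all_order all_algebra.
From mathcomp Require Import zify.
From Stdlib Require Import FunctionalExtensionality.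
Local Open Scope ring_scope.
Import GRing.Theory.
Set Implicit Arguments. Unset Strict Implicit.

(* A monomer can only be merged with the tile immediately to its right, so
   [derive] commutes with concatenation at every cut between two tiles that
   cannot be merged, and there [psi] turns the concatenation into a tensor
   product.  Voids are never merged; cutting R at its voids, each stretch
   between two consecutive voids consists of monomers only and contributes a
   factor [varphi L], while the two outer stretches give the boundary factors. *)

Lemma seq_ind_pair (T : Type) (P : seq T -> Prop) :
  P [::] -> (forall t, P [:: t]) ->
  (forall t u s, P s -> P (u :: s) -> P [:: t, u & s]) ->
  forall s, P s.
Proof.
move=> P0 P1 P2 s; suff [] : P s /\ forall t, P (t :: s) by [].
by elim: s => [|u s [Ps Pus]]; split=> // t; apply: P2.
Qed.

Lemma eq_cat_take_drop (T : eqType) (w x y : seq T) :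
  (w == x ++ y) = (take (size x) w == x) && (drop (size x) w == y).
Proof.
apply/eqP/andP => [->|[/eqP take_w /eqP drop_w]].
  by rewrite take_size_cat // drop_size_cat.
by rewrite -(cat_take_drop (size x) w) take_w drop_w.
Qed.

Lemma tword_inj : injective tword.
Proof. by case; case. Qed.

HB.instance Definition _ := Equality.copy tile (inj_type tword_inj).

Definition pair_tile (t u : tile) : option tile :=
  match t, u with
  | Mono, Mono => Some Dimer
  | Mono, RMono1 => Some TDimer1
  | Mono, RMono2 => Some TDimer2
  | _, _ => None
  end.

Lemma size_tword_pair t u d : pair_tile t u = Some d ->
  size (tword d) = (size (tword t) + size (tword u))%N.
Proof. by case: t; case: u => // -[<-]. Qed.

Lemma tiles_word_cons t D : tiles_word (t :: D) = tword t ++ tiles_word D.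
Proof. by []. Qed.

Lemma tiles_word_cat A B : tiles_word (A ++ B) = tiles_word A ++ tiles_word B.
Proof. by rewrite /tiles_word map_cat flatten_cat. Qed.

Lemma size_tiles_word_nseq_Mono L : size (tiles_word (nseq L Mono)) = (3 * L)%N.
Proof. by elim: L => // L IHL; rewrite tiles_word_cons size_cat IHL mulnS. Qed.

Lemma derive1 t : derive [:: t] = [:: [:: t]].
Proof. by case: t. Qed.

Lemma derive_cons2 t u s : derive [:: t, u & s] =
  map (cons t) (derive (u :: s)) ++
  (if pair_tile t u is Some d then map (cons d) (derive s) else [::]).
Proof. by case: t; case: u; rewrite /= ?cats0. Qed.

Lemma size_derive R :
  {in derive R, forall D, size (tiles_word D) = size (tiles_word R)}.
Proof.
elim/seq_ind_pair: R => [|t|t u s IHs IHus] D.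
- by rewrite inE => /eqP ->.
- by rewrite derive1 inE => /eqP ->.
rewrite derive_cons2 mem_cat => /orP[/mapP[D' /IHus sD' ->]|].
  by rewrite tiles_word_cons size_cat sD' -size_cat.
case E : (pair_tile t u) => [d|] // /mapP[D' /IHs sD' ->].
by rewrite tiles_word_cons size_cat sD' (size_tword_pair E) -addnA -!size_cat.
Qed.

Lemma derive_cat A C : pair_tile (last Void A) (head Void C) = None ->
  derive (A ++ C) = [seq a ++ c | a <- derive A, c <- derive C].
Proof.
elim/seq_ind_pair: A => [|t|t u s IHs IHus] sep.
- by rewrite /= cats0 map_id.
- rewrite derive1 allpairs1l; case: C sep => [|u C] sep; first by rewrite cats0 derive1.
  by rewrite cat1s derive_cons2 sep cats0.
have sep_s : pair_tile (last Void s) (head Void C) = None by case: s {IHs IHus} sep.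
rewrite !cat_cons derive_cons2 -cat_cons (IHus sep) (IHs sep_s) derive_cons2.
rewrite allpairs_cat allpairs_mapl map_allpairs.
case: pair_tile => [d|]; last by rewrite allpairs0l !cats0.
by rewrite allpairs_mapl map_allpairs.
Qed.

Definition chain_tiling (Ls : seq nat) : seq tile :=
  foldr (fun L D => nseq L Mono ++ Void :: D) [::] Ls.

Lemma last_chain_tiling Ls : last Void (chain_tiling Ls) = Void.
Proof. by elim: Ls => //= L Ls IHLs; rewrite last_cat. Qed.

Lemma last_split A Ls Z : last Void (A ++ Void :: chain_tiling Ls ++ Z) = last Void Z.
Proof. by rewrite last_cat /= last_cat last_chain_tiling. Qed.

Lemma last_nseq_Mono L : last Void (nseq L Mono) = if L is 0 then Void else Mono.
Proof. by case: L => // L; elim: L. Qed.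

Lemma void_mono_chain_tiling m : all (fun t => is_void t || is_mono t) m ->
  exists Ls LK, m = chain_tiling Ls ++ nseq LK Mono.
Proof.
elim: m => [|t m IHm] /=; first by exists [::], 0%N.
case: t => //= /IHm[Ls [LK ->]]; first by exists (0%N :: Ls), LK.
by case: Ls => [|L Ls]; [exists [::], LK.+1 | exists (L.+1 :: Ls), LK].
Qed.

Lemma void_offs_cat p A B :
  void_offs p (A ++ B) = void_offs p A ++ void_offs (p + size (tiles_word A)) B.
Proof.
elim: A p => [|t A IHA] p /=; first by rewrite addn0.
by rewrite IHA -catA tiles_word_cons size_cat addnA.
Qed.

Lemma void_offs_free p A : ~~ has is_void A -> void_offs p A = [::].
Proof. by elim: A p => //= -[] //= A IHA p /IHA ->. Qed.

Lemma void_offs_chain_tiling p Ls :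
  void_offs p (Void :: chain_tiling Ls) =
  [seq p + k + 3 * sumn (take k Ls) | k <- iota 0 (size Ls).+1]%N.
Proof.
elim: Ls p => [|L Ls IHLs] p; first by rewrite /= !addn0.
rewrite [LHS]/= void_offs_cat void_offs_free ?has_nseq ?andbF //.
rewrite size_tiles_word_nseq_Mono IHLs.
have -> : iota 0 (size (L :: Ls)).+1 = 0 :: map (addn 1) (iota 0 (size Ls).+1).
  by rewrite -iotaDl.
move: (size Ls).+1 => n /=; rewrite -map_comp; congr (_ :: _); first lia.
by apply: eq_map => k /=; rewrite add1n /= add0n; lia.
Qed.

Lemma void_offs_split p A Ls Z : ~~ has is_void A -> ~~ has is_void Z ->
  void_offs p (A ++ Void :: chain_tiling Ls ++ Z) =
  [seq p + size (tiles_word A) + k + 3 * sumn (take k Ls) | k <- iota 0 (size Ls).+1]%N.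
Proof.
move=> A_free Z_free; rewrite void_offs_cat void_offs_free //.
by rewrite -cat_cons void_offs_cat void_offs_chain_tiling (void_offs_free _ Z_free) cats0.
Qed.

Section Factorization.
Variables (F : comRingType) (lam : F).

Lemma qvec_eq (u v : qvec F) : u.1 = v.1 -> u.2 =1 v.2 -> u = v.
Proof. by case: u v => a f [b g] /= -> /functional_extensionality ->. Qed.

Lemma scale1 (u : qvec F) : scale 1 u = u.
Proof. by apply: qvec_eq => // w; rewrite /= mul1r. Qed.

Lemma tens_scalel c (u v : qvec F) : tens (scale c u) v = scale c (tens u v).
Proof. by apply: qvec_eq => // w /=; case: ifP; rewrite (mulr0, mulrA). Qed.

Lemma tens_scaler c (u v : qvec F) : tens u (scale c v) = scale c (tens u v).
Proof. by apply: qvec_eq => // w /=; case: ifP; rewrite (mulr0, mulrCA). Qed.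

Lemma psi_nil : psi lam [::] = ket F [::].
Proof. by apply: qvec_eq => // w; rewrite /= big_seq1 mul1r. Qed.

Lemma psi_tile t : psi lam [:: t] = scale (lam ^+ is_dimerlike t) (ket F (tword t)).
Proof.
apply: qvec_eq => [|w]; first by rewrite /= tiles_word_cons cats0.
by rewrite /psi derive1 /= big_seq1 /ndim /= addn0 tiles_word_cons cats0.
Qed.

Lemma psi_cat A C : pair_tile (last Void A) (head Void C) = None ->
  psi lam (A ++ C) = tens (psi lam A) (psi lam C).
Proof.
move=> /derive_cat dAC; apply: qvec_eq => [|w] /=.
  by rewrite tiles_word_cat size_cat.
(* All derived tilings of A have the word length of A, so the test
   [w == a ++ c] splits at the cut used by [tens]. *)
rewrite dAC big_allpairs_dep /=; case: ifP => [_|/negbT sw].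
  rewrite big_distrl; apply: eq_big_seq => a /size_derive sa /=.
  rewrite big_distrr; apply: eq_big_seq => c _ /=.
  by rewrite /ndim count_cat exprD tiles_word_cat eq_cat_take_drop sa -mulnb natrM mulrACA.
rewrite big1_seq // => a /andP[_ /size_derive sa].
rewrite big1_seq // => c /andP[_ /size_derive sc].
case: eqP => [w_ac|]; last by rewrite mulr0.
by move: sw; rewrite w_ac tiles_word_cat size_cat sa sc eqxx.
Qed.

Lemma psi_cat_Void A C :
  psi lam (A ++ Void :: C) = tens (psi lam A) (tens (ket F [:: false]) (psi lam C)).
Proof.
rewrite psi_cat; last by case: (last Void A).
by rewrite -(cat1s Void C) psi_cat // psi_tile scale1.
Qed.

Lemma psi_chain_tiling Ls : psi lam (chain_tiling Ls) = chain lam Ls.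
Proof. by elim: Ls => [|L Ls IHLs] /=; rewrite ?psi_nil // psi_cat_Void IHLs. Qed.

Lemma psi_split A Ls Z :
  psi lam (A ++ Void :: chain_tiling Ls ++ Z) =
  tens (psi lam A) (tens (ket F [:: false]) (tens (chain lam Ls) (psi lam Z))).
Proof. by rewrite psi_cat_Void psi_cat ?last_chain_tiling // psi_chain_tiling. Qed.

Lemma psi_left_boundary l L0 C : l = [::] \/ l = [:: LDimer] ->
  psi lam (l ++ nseq L0 Mono) =
  if is_ldimer (head Void ((l ++ nseq L0 Mono) ++ Void :: C))
  then scale lam (tens (ket F [:: true; true; false; false; false]) (varphi lam L0))
  else varphi lam L0.
Proof.
case=> ->; first by case: L0.
by rewrite psi_cat // psi_tile expr1 tens_scalel.
Qed.

Lemma psi_right_boundary LK r :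
  r = [::] \/ r = [:: RDimer] \/ r = [:: RMono1] \/ r = [:: RMono2] ->
  exists LK',
    match last Void (nseq LK Mono ++ r) with
    | RDimer => psi lam (nseq LK Mono ++ r) =
                scale lam (tens (varphi lam LK') (ket F [:: false; true; true]))
    | RMono1 => (0 < LK')%N /\ psi lam (nseq LK Mono ++ r) = varphiR lam 1 LK'
    | RMono2 => (0 < LK')%N /\ psi lam (nseq LK Mono ++ r) = varphiR lam 2 LK'
    | _ => psi lam (nseq LK Mono ++ r) = varphi lam LK'
    end.
Proof.
case=> [|[|[|]]] ->; rewrite ?cats0 ?last_cat /=.
- by exists LK; rewrite last_nseq_Mono; case: LK.
- exists LK; rewrite psi_cat; last by case: (last _ _).
  by rewrite psi_tile expr1 tens_scaler.
- by exists LK.+1; rewrite /varphiR /= cats1.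
- by exists LK.+1; rewrite /varphiR /= cats1.
Qed.

End Factorization.

Theorem theorem2p10 (F : comRingType) (lam : F) (n : nat) (R : seq tile) :
  root_tiling n R ->
  (0 < size (void_offsets R))%N ->
  exists (Ls : seq nat) (L0 LK : nat) (psil psir : qvec F),
    size Ls = (size (void_offsets R)).-1 /\
    psil = (if is_ldimer (head Void R)
            then scale lam (tens (ket F [:: true; true; false; false; false])
                                 (varphi lam L0))
            else varphi lam L0) /\
    match last Void R with
    | RDimer => psir = scale lam (tens (varphi lam LK) (ket F [:: false; true; true]))
    | RMono1 => (0 < LK)%N /\ psir = varphiR lam 1 LK
    | RMono2 => (0 < LK)%N /\ psir = varphiR lam 2 LK
    | _ => psir = varphi lam LK
    end /\
    void_offsets R =
      [seq (psil.1 + k + 3 * sumn (take k Ls))%N | k <- iota 0 (size (void_offsets R))] /\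
    psi lam R = tens psil (tens (ket F [:: false]) (tens (chain lam Ls) psir)).
Proof.
case=> _ [l [m [r [-> [Hl [Hm Hr]]]]]] has_void.
have l_free : ~~ has is_void l by case: Hl => ->.
have r_free : ~~ has is_void r by case: Hr => [|[|[|]]] ->.
have [[|L0 Ls] [LK Em]] := void_mono_chain_tiling Hm.
  suff /(void_offs_free 0) no_void : ~~ has is_void (l ++ m ++ r).
    by rewrite /void_offsets no_void in has_void.
  by rewrite Em !has_cat has_nseq /= andbF (negbTE l_free) (negbTE r_free).
have -> : l ++ m ++ r = (l ++ nseq L0 Mono) ++ Void :: chain_tiling Ls ++ nseq LK Mono ++ r.
  by rewrite Em -!catA.
have [LK' psi_r] := psi_right_boundary lam LK Hr.
exists Ls, L0, LK', (psi lam (l ++ nseq L0 Mono)), (psi lam (nseq LK Mono ++ r)).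
have A_free : ~~ has is_void (l ++ nseq L0 Mono) by rewrite has_cat has_nseq /= andbF orbF.
have Z_free : ~~ has is_void (nseq LK Mono ++ r) by rewrite has_cat has_nseq /= andbF.
rewrite /void_offsets void_offs_split //.
rewrite size_map size_iota add0n last_split psi_split.
split; first by [].
split; first exact: psi_left_boundary.
by split; last split.
Qed.
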